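(* For every $n\ge1$, every $c\in\mathbb{Q}$, every $w\in\mathfrak{H}$ and every $u\in\{x,y\}$, $$\partial_n^{(c)}(wu)=\partial_n^{(c)}(w)\,u+\mathrm{sgn}(u)\,\phi_{n-1}^{(c)}(wx)\,y,$$ i.e. $[\partial_n^{(c)},R_u]=\mathrm{sgn}(u)\,R_y\phi_{n-1}^{(c)}R_x$. Consequently $\partial_n^{(c)}R_z=R_z\partial_n^{(c)}$.
   Context: Let $\mathfrak{H}=\mathbb{Q}\langle x,y\rangle$, $z=x+y$, $\mathrm{sgn}(x)=1$, $\mathrm{sgn}(y)=-1$. Products of operators denote composition, $[A,B]=AB-BA$, $\mathrm{ad}(A)(B)=[A,B]$; $R_w(w')=w'w$. $H$ is the $\mathbb{Q}$-linear map with $H(w)=\deg(w)w$ for words $w$. $\partial_1$ is the derivation with $\partial_1(x)=xy$, $\partial_1(y)=-xy$. For $c\in\mathbb{Q}$, $\theta^{(c)}$ is the unique $\mathbb{Q}$-linear map with $\theta^{(c)}(x)=\frac12(xz+zx)$, $\theta^{(c)}(y)=\frac12(yz+zy)$ and $\theta^{(c)}(ww')=\theta^{(c)}(w)w'+w\theta^{(c)}(w')+c\,\partial_1(w)H(w')$; $\partial_n^{(c)}=\frac{1}{(n-1)!}\mathrm{ad}(\theta^{(c)})^{n-1}(\partial_1)$. The operators $\phi_n^{(c)}$ are defined by $\phi_0^{(c)}=\mathrm{id}$ and $\phi_n^{(c)}=\frac1n\bigl([\theta^{(c)},\phi_{n-1}^{(c)}]+\frac12(R_z\phi_{n-1}^{(c)}+\phi_{n-1}^{(c)}R_z)+c\,\partial_1\phi_{n-1}^{(c)}\bigr)$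 for $n\ge1$. *)

(* The free noncommutative algebra H = Q<x,y> is modelled
   by formal finite sums of words: an element is a list of (coefficient, word)
   pairs, denoting the sum of coef * word.  Two representations denote the
   same element of H iff all their coefficients agree ([nceq]).  Every
   operator below is defined on words and extended linearly ([ext]), so it is
   well defined on H. *)
From HB Require Import structures.
From mathcomp Require Import all_boot all_order all_algebra.
Set Implicit Arguments. Unset Strict Implicit. Unset Printing Implicit Defensive.
Import GRing.Theory Num.Theory.
Local Open Scope ring_scope.

(* letters: true = x, false = y *)
Definition word := seq bool.
Definition ncpoly := seq (rat * word).

Definition ncoef (p : ncpoly) (v : word) : rat := \sum_(t <- p | t.2 == v) t.1.
Definition nceq (p q : ncpoly) : Prop := forall v, ncoef p v = ncoef q v.

Definition ncscale (a : rat) (p : ncpoly) : ncpoly := [seq (a * t.1, t.2) | t <- p].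
Definition ncadd (p q : ncpoly) : ncpoly := p ++ q.
Definition ncmul (p q : ncpoly) : ncpoly :=
  [seq (s.1 * t.1, s.2 ++ t.2) | s <- p, t <- q].
Definition ncw (w : word) : ncpoly := [:: (1, w)].

Definition ext (f : word -> ncpoly) (p : ncpoly) : ncpoly :=
  flatten [seq ncscale t.1 (f t.2) | t <- p].

Definition sgn (u : bool) : rat := if u then 1 else -1.

Definition op := ncpoly -> ncpoly.
Definition opadd (A B : op) : op := fun p => ncadd (A p) (B p).
Definition opsub (A B : op) : op := fun p => ncadd (A p) (ncscale (-1) (B p)).
Definition opscale (a : rat) (A : op) : op := fun p => ncscale a (A p).
Definition opcomp (A B : op) : op := fun p => A (B p).
Definition ad (A B : op) : op := opsub (opcomp A B) (opcomp B A).

Definition Rw (v : word) : op := ext (fun w => ncw (w ++ v)).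
Definition Rz : op := opadd (Rw [:: true]) (Rw [:: false]).

Definition Hop : op := ext (fun w => ncscale (size w)%:R (ncw w)).

(* partial_1 : derivation with x |-> xy, y |-> -xy *)
Definition d1_letter (a : bool) : ncpoly := ncscale (sgn a) (ncw [:: true; false]).
Fixpoint d1_word (w : word) : ncpoly :=
  match w with
  | [::] => [::]
  | a :: w' => ncadd (ncmul (d1_letter a) (ncw w')) (ncmul (ncw [:: a]) (d1_word w'))
  end.
Definition d1 : op := ext d1_word.

(* theta^(c): theta(a) = (a z + z a)/2 on letters, and
   theta(a w') = theta(a) w' + a theta(w') + c d1(a) H(w') *)
Definition theta_letter (a : bool) : ncpoly :=
  ncscale (1 / 2%:R)
    [:: (1, [:: a; true]); (1, [:: a; false]); (1, [:: true; a]); (1, [:: false; a])].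
Fixpoint theta_word (c : rat) (w : word) : ncpoly :=
  match w with
  | [::] => [::]
  | a :: w' =>
      ncadd (ncmul (theta_letter a) (ncw w'))
        (ncadd (ncmul (ncw [:: a]) (theta_word c w'))
               (ncscale c (ncmul (d1_letter a) (Hop (ncw w')))))
  end.
Definition theta (c : rat) : op := ext (theta_word c).

Definition dn (c : rat) (n : nat) : op :=
  opscale (1 / (n.-1)`!%:R) (iter n.-1 (ad (theta c)) d1).

Fixpoint phi (c : rat) (n : nat) : op :=
  match n with
  | 0 => fun p => p
  | n'.+1 =>
      opscale (1 / n'.+1%:R)
        (opadd (ad (theta c) (phi c n'))
          (opadd (opscale (1 / 2%:R) (opadd (opcomp Rz (phi c n')) (opcomp (phi c n') Rz)))
                 (opscale c (opcomp d1 (phi c n')))))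
  end.

(* 1. On words, the recursions defining ∂_1 and θ give ∂_1(wu) and θ(wu);
      hence [∂_1, R_u] = sgn(u) R_y R_x and [θ, R_u] = (R_z R_u + R_u R_z)/2
      + c R_u ∂_1, so ∂_1 commutes with R_z and [θ, R_z] = R_z^2 + c R_z ∂_1.
   2. Induction on n.  The rule for ∂_{n+1} = [θ, ∂_n]/n follows from the rule
      for ∂_n, the recursion defining φ_n and [∂_1, ∂_n] = 0 ([rule_Rw_succ]).
      Conversely [∂_1, ∂_{n+1}] = 0 follows from the rule for ∂_{n+1} by
      induction on words, once φ_n commutes with ∂_1 - R_z ([comm_d1_succ]).
   3. Every operator of the algebra generated by R_z, ∂_1, ..., ∂_n commutes
      with ∂_1 - R_z by the induction hypothesis, and φ_n belongs to this
      algebra because ad θ maps the algebra of level n into that of level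
      n + 1, as [θ, ∂_k] = k ∂_{k+1} ([gen_alg_ad_theta]). *)

From HB Require Import structures.
From mathcomp Require Import all_boot all_order all_algebra ring.
From Stdlib Require Import Setoid Morphisms.
Set Implicit Arguments. Unset Strict Implicit. Unset Printing Implicit Defensive.
Import GRing.Theory Num.Theory.
Local Open Scope ring_scope.

Lemma ncoef_nil v : ncoef [::] v = 0.
Proof. by rewrite /ncoef big_nil. Qed.

Lemma ncoef_cons t p v :
  ncoef (t :: p) v = (if t.2 == v then t.1 else 0) + ncoef p v.
Proof. by rewrite /ncoef big_cons; case: ifP; rewrite ?add0r. Qed.

Lemma ncoef_add p q v : ncoef (ncadd p q) v = ncoef p v + ncoef q v.
Proof. exact: big_cat. Qed.

Lemma ncoef_scale a p v : ncoef (ncscale a p) v = a * ncoef p v.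
Proof.
rewrite /ncoef /ncscale big_map big_distrr /= big_mkcond [RHS]big_mkcond /=.
by apply: eq_bigr => t _; case: ifP; rewrite ?mulr0.
Qed.

Lemma ncoef_ncw w v : ncoef (ncw w) v = (w == v)%:R.
Proof. by rewrite ncoef_cons ncoef_nil addr0; case: eqP. Qed.

Lemma ncoef_ext f p v : ncoef (ext f p) v = \sum_(t <- p) t.1 * ncoef (f t.2) v.
Proof.
elim: p => [|t p IH]; first by rewrite ncoef_nil big_nil.
by rewrite /ext /= ncoef_add -/(ext f p) IH big_cons ncoef_scale.
Qed.

(* A coefficient-weighted sum over the terms of [p] can be regrouped word by
   word; hence it only depends on the element of H denoted by [p]. *)
Lemma sum_terms_by_word (g : word -> rat) p (L : seq word) :
  uniq L -> {subset map snd p <= L} ->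
  \sum_(t <- p) t.1 * g t.2 = \sum_(w <- L) ncoef p w * g w.
Proof.
move=> uL; elim: p => [|t p IH] sub.
  by rewrite big_nil big1 // => w _; rewrite ncoef_nil mul0r.
rewrite big_cons IH; last by move=> w hw; apply: sub; rewrite /= inE hw orbT.
have tL : t.2 \in L by apply: sub; rewrite /= inE eqxx.
under [RHS]eq_bigr => w _ do rewrite ncoef_cons mulrDl.
rewrite big_split /=; congr (_ + _).
rewrite (bigD1_seq t.2) //= eqxx big1 ?addr0 // => w.
by rewrite eq_sym => /negbTE ->; rewrite mul0r.
Qed.

Lemma sum_terms_nceq (g : word -> rat) p q :
  nceq p q -> \sum_(t <- p) t.1 * g t.2 = \sum_(t <- q) t.1 * g t.2.
Proof.
move=> epq; set L := undup (map snd p ++ map snd q).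
have uL : uniq L by rewrite undup_uniq.
rewrite (@sum_terms_by_word g p L) // => [|w h]; last by rewrite mem_undup mem_cat h.
rewrite (@sum_terms_by_word g q L) // => [|w h]; last by rewrite mem_undup mem_cat h orbT.
by apply: eq_bigr => w _; rewrite epq.
Qed.

Ltac coef_ring := let v := fresh "v" in
  move=> v; rewrite ?(ncoef_add, ncoef_scale, ncoef_nil) ?cat_cons ?cat0s; ring.

#[local] Instance nceq_equiv : Equivalence nceq.
Proof. by split=> [p v | p q e v | p q r e e' v]; rewrite ?e ?e'. Qed.

#[local] Instance ncadd_proper : Proper (nceq ==> nceq ==> nceq) ncadd.
Proof. by move=> p q e p' q' e' v; rewrite !ncoef_add e e'. Qed.

#[local] Instance ncscale_proper a : Proper (nceq ==> nceq) (ncscale a).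
Proof. by move=> p q e v; rewrite !ncoef_scale e. Qed.

(* An operator on representations is an operator on H when it respects
   [nceq]; it is moreover linear. *)
Definition linop (A : op) : Prop :=
  [/\ forall p q, nceq p q -> nceq (A p) (A q),
      forall p q, nceq (A (ncadd p q)) (ncadd (A p) (A q)) &
      forall a p, nceq (A (ncscale a p)) (ncscale a (A p))].

Section LinearOperator.
Variable A : op.
Hypothesis linA : linop A.

Lemma linop_proper : Proper (nceq ==> nceq) A.
Proof. by case: linA. Qed.

Lemma linopD p q : nceq (A (ncadd p q)) (ncadd (A p) (A q)).
Proof. by case: linA. Qed.

Lemma linopZ a p : nceq (A (ncscale a p)) (ncscale a (A p)).
Proof. by case: linA. Qed.

Lemma linop_coef p q v : nceq p q -> ncoef (A p) v = ncoef (A q) v.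
Proof. by move=> e; rewrite (linop_proper e). Qed.

Lemma linop_coefD p q v : ncoef (A (ncadd p q)) v = ncoef (A p) v + ncoef (A q) v.
Proof. by rewrite linopD ncoef_add. Qed.

Lemma linop_coefZ a p v : ncoef (A (ncscale a p)) v = a * ncoef (A p) v.
Proof. by rewrite linopZ ncoef_scale. Qed.

Lemma linop_nil : nceq (A [::]) [::].
Proof.
have e0 : nceq [::] (ncscale 0 [::]) by [].
by move=> v; rewrite (linop_coef v e0) linop_coefZ mul0r ncoef_nil.
Qed.

End LinearOperator.

Lemma linop_ext f : linop (ext f).
Proof.
split=> [p q e v | p q v | a p v]; rewrite ?ncoef_add ?ncoef_scale !ncoef_ext.
- exact: (sum_terms_nceq (fun w => ncoef (f w) v) e).
- by rewrite big_cat.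
- by rewrite big_distrr /ncscale big_map; apply: eq_bigr => t _ /=; rewrite mulrA.
Qed.

Lemma linop_id : linop (fun p => p).
Proof. by split. Qed.

Lemma linop_add A B : linop A -> linop B -> linop (opadd A B).
Proof.
move=> lA lB; split=> [p q e v | p q v | a p v]; rewrite /opadd !ncoef_add.
- by rewrite (linop_coef lA v e) (linop_coef lB v e).
- by rewrite (linop_coefD lA) (linop_coefD lB); ring.
- by rewrite ncoef_scale ?ncoef_add (linop_coefZ lA) (linop_coefZ lB); ring.
Qed.

Lemma linop_scale a A : linop A -> linop (opscale a A).
Proof.
move=> lA; split=> [p q e v | p q v | b p v]; rewrite /opscale ?ncoef_add !ncoef_scale.
- by rewrite (linop_coef lA v e).
- by rewrite (linop_coefD lA); ring.
- by rewrite (linop_coefZ lA); ring.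
Qed.

Lemma linop_comp A B : linop A -> linop B -> linop (opcomp A B).
Proof.
move=> lA lB; split=> [p q e v | p q v | a p v]; rewrite /opcomp.
- exact/(linop_coef lA)/(linop_proper lB).
- by rewrite ncoef_add -(linop_coefD lA); apply/(linop_coef lA)/(linopD lB).
- by rewrite ncoef_scale -(linop_coefZ lA); apply/(linop_coef lA)/(linopZ lB).
Qed.

Lemma linop_ad A B : linop A -> linop B -> linop (ad A B).
Proof.
by move=> lA lB; apply: (linop_add (linop_comp lA lB));
  apply: linop_scale; apply: linop_comp.
Qed.

Lemma linop_words A B : linop A -> linop B ->
  (forall w, nceq (A (ncw w)) (B (ncw w))) -> forall p, nceq (A p) (B p).
Proof.
move=> lA lB eAB; elim=> [|[a w] p IH]; first by move=> v; rewrite !linop_nil.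
have e : nceq ((a, w) :: p) (ncadd (ncscale a (ncw w)) p).
  move=> v; rewrite ncoef_add ncoef_scale ncoef_ncw ncoef_cons.
  by case: eqP; rewrite ?mulr1 ?mulr0.
move=> v; rewrite (linop_coef lA v e) (linop_coef lB v e).
by rewrite !(linop_coefD lA, linop_coefD lB, linop_coefZ lA, linop_coefZ lB) eAB IH.
Qed.

Definition Lw (v : word) : op := ext (fun w => ncw (v ++ w)).

Lemma linop_Lw v : linop (Lw v). Proof. exact: linop_ext. Qed.
Lemma linop_Rw v : linop (Rw v). Proof. exact: linop_ext. Qed.
Lemma linop_Rz : linop Rz. Proof. exact: linop_add (linop_Rw _) (linop_Rw _). Qed.
Lemma linop_d1 : linop d1. Proof. exact: linop_ext. Qed.
Lemma linop_theta c : linop (theta c). Proof. exact: linop_ext. Qed.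

#[local] Hint Resolve linop_id linop_add linop_scale linop_comp linop_ad linop_Lw
  linop_Rw linop_Rz linop_d1 linop_theta : linop.

Lemma linop_dn c n : linop (dn c n).
Proof. by apply: linop_scale; elim: n.-1 => [|k IH] /=; auto with linop. Qed.

Lemma linop_phi c n : linop (phi c n).
Proof. by elim: n => [|k IH] /=; auto 10 with linop. Qed.

#[local] Hint Resolve linop_dn linop_phi : linop.

#[local] Instance ext_proper f : Proper (nceq ==> nceq) (ext f) := linop_proper (linop_ext f).
#[local] Instance Lw_proper v : Proper (nceq ==> nceq) (Lw v) := linop_proper (linop_Lw v).
#[local] Instance Rw_proper v : Proper (nceq ==> nceq) (Rw v) := linop_proper (linop_Rw v).
#[local] Instance Rz_proper : Proper (nceq ==> nceq) Rz := linop_proper linop_Rz.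
#[local] Instance d1_proper : Proper (nceq ==> nceq) d1 := linop_proper linop_d1.
#[local] Instance theta_proper c : Proper (nceq ==> nceq) (theta c) :=
  linop_proper (linop_theta c).
#[local] Instance dn_proper c n : Proper (nceq ==> nceq) (dn c n) :=
  linop_proper (linop_dn c n).
#[local] Instance phi_proper c n : Proper (nceq ==> nceq) (phi c n) :=
  linop_proper (linop_phi c n).

Lemma ext_ncw f w : nceq (ext f (ncw w)) (f w).
Proof. by move=> v; rewrite ncoef_ext big_cons big_nil mul1r addr0. Qed.

Lemma Rw_ncw u w : nceq (Rw u (ncw w)) (ncw (w ++ u)).
Proof. exact: ext_ncw. Qed.

Lemma Lw_ncw u w : nceq (Lw u (ncw w)) (ncw (u ++ w)).
Proof. exact: ext_ncw. Qed.

Lemma ncmul_ext p q : nceq (ncmul p q) (ext (fun w => Lw w q) p).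
Proof.
move=> v; elim: p => [|s p IH]; first by rewrite ncoef_ext !big_nil.
rewrite /ncmul allpairs_cons ncoef_add -/(ncmul p q) IH !ncoef_ext big_cons.
congr (_ + _); rewrite /Lw ncoef_ext big_distrr /ncoef big_map big_mkcond /=.
apply: eq_bigr => t _; rewrite big_cons big_nil /=.
by case: (_ == v); rewrite ?mulr1 ?mulr0 ?addr0 ?mulrA.
Qed.

Lemma theta_letterE a : nceq (theta_letter a)
  (ncscale (1 / 2%:R) (ncadd (ncw [:: a; true]) (ncadd (ncw [:: a; false])
     (ncadd (ncw [:: true; a]) (ncw [:: false; a]))))).
Proof. by []. Qed.

(* From now on elements of H are only manipulated through the lemmas above;
   sealing the representation keeps setoid rewriting from unfolding it. *)
Opaque ext ncw ncmul ncadd ncscale Lw.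

Lemma Lw_Rw a u p : nceq (Lw a (Rw u p)) (Rw u (Lw a p)).
Proof.
apply: (linop_words (A := opcomp (Lw a) (Rw u)) (B := opcomp (Rw u) (Lw a)));
  auto with linop.
by move=> w; rewrite /opcomp; setoid_rewrite Rw_ncw; setoid_rewrite Lw_ncw;
  setoid_rewrite Rw_ncw; rewrite catA.
Qed.

Lemma d1_cons a w : nceq (d1 (ncw (a :: w)))
  (ncadd (ncscale (sgn a) (ncw [:: true, false & w])) (Lw [:: a] (d1 (ncw w)))).
Proof.
rewrite /d1; setoid_rewrite ext_ncw.
change (d1_word (a :: w)) with
  (ncadd (ncmul (d1_letter a) (ncw w)) (ncmul (ncw [:: a]) (d1_word w))).
rewrite /d1_letter; setoid_rewrite ncmul_ext.
setoid_rewrite (linopZ (linop_ext _)); setoid_rewrite ext_ncw.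
by setoid_rewrite Lw_ncw.
Qed.

Lemma Hop_ncw w : nceq (Hop (ncw w)) (ncscale (size w)%:R (ncw w)).
Proof. exact: ext_ncw. Qed.

Lemma theta_cons c a w : nceq (theta c (ncw (a :: w)))
  (ncadd (ncscale (1 / 2%:R) (ncadd (ncw [:: a, true & w]) (ncadd (ncw [:: a, false & w])
          (ncadd (ncw [:: true, a & w]) (ncw [:: false, a & w])))))
   (ncadd (Lw [:: a] (theta c (ncw w)))
          (ncscale (c * sgn a * (size w)%:R) (ncw [:: true, false & w])))).
Proof.
rewrite /theta; setoid_rewrite ext_ncw.
change (theta_word c (a :: w)) with
  (ncadd (ncmul (theta_letter a) (ncw w))
     (ncadd (ncmul (ncw [:: a]) (theta_word c w))
        (ncscale c (ncmul (d1_letter a) (Hop (ncw w)))))).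
setoid_rewrite ncmul_ext; setoid_rewrite theta_letterE; rewrite /d1_letter.
repeat first [ setoid_rewrite (linopD (linop_ext _)) | setoid_rewrite (linopZ (linop_ext _)) ].
setoid_rewrite ext_ncw; setoid_rewrite Hop_ncw; setoid_rewrite (linopZ (linop_Lw _)).
setoid_rewrite Lw_ncw; coef_ring.
Qed.

Lemma d1_nil : nceq (d1 (ncw [::])) [::].
Proof. exact: ext_ncw. Qed.

Lemma theta_nil c : nceq (theta c (ncw [::])) [::].
Proof. exact: ext_ncw. Qed.

Lemma Rz_split p : nceq (Rz p) (ncadd (Rw [:: true] p) (Rw [:: false] p)).
Proof. by []. Qed.

Lemma dn_1 c p : nceq (dn c 1 p) (d1 p).
Proof. by move=> v; rewrite /dn /opscale ncoef_scale /= divr1 mul1r. Qed.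

Lemma dn_succ c m p : nceq (dn c m.+2 p)
  (ncscale (1 / m.+1%:R)
     (ncadd (theta c (dn c m.+1 p)) (ncscale (-1) (dn c m.+1 (theta c p))))).
Proof.
move=> v; rewrite /dn /opscale /= /ad /opsub /opcomp !(ncoef_add, ncoef_scale).
rewrite (linop_coefZ (linop_theta c)) factS natrM invfM !div1r; ring.
Qed.

Lemma phi_succ c m p : nceq (phi c m.+1 p)
  (ncscale (1 / m.+1%:R)
    (ncadd (ncadd (theta c (phi c m p)) (ncscale (-1) (phi c m (theta c p))))
      (ncadd (ncscale (1 / 2%:R) (ncadd (Rz (phi c m p)) (phi c m (Rz p))))
             (ncscale c (d1 (phi c m p)))))).
Proof. by []. Qed.

Lemma phi_0 c p : phi c 0 p = p.
Proof. by []. Qed.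

Opaque Hop Rw Rz d1 theta dn phi.

Hint Rewrite (fun v => linopD (linop_Rw v)) (fun v => linopZ (linop_Rw v))
  (fun v => linopD (linop_Lw v)) (fun v => linopZ (linop_Lw v))
  (linopD linop_Rz) (linopZ linop_Rz) (linopD linop_d1) (linopZ linop_d1)
  (fun c => linopD (linop_theta c)) (fun c => linopZ (linop_theta c))
  (fun c n => linopD (linop_dn c n)) (fun c n => linopZ (linop_dn c n))
  (fun c n => linopD (linop_phi c n)) (fun c n => linopZ (linop_phi c n)) : linear.

Lemma sgnE : (sgn true = 1) * (sgn false = -1). Proof. by []. Qed.

Lemma d1_rcons w u : nceq (d1 (ncw (w ++ [:: u])))
  (ncadd (Rw [:: u] (d1 (ncw w))) (ncscale (sgn u) (ncw (w ++ [:: true; false])))).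
Proof.
elim: w => [|a w IH] /=; setoid_rewrite d1_cons.
  setoid_rewrite d1_nil; coef_ring.
setoid_rewrite IH; autorewrite with linear; setoid_rewrite Lw_Rw.
setoid_rewrite Lw_ncw; setoid_rewrite Rw_ncw; coef_ring.
Qed.

Lemma theta_rcons c w u : nceq (theta c (ncw (w ++ [:: u])))
  (ncadd (Rw [:: u] (theta c (ncw w)))
   (ncadd (ncscale (1 / 2%:R)
            (ncadd (ncw (w ++ [:: u; true])) (ncadd (ncw (w ++ [:: u; false]))
               (ncadd (ncw (w ++ [:: true; u])) (ncw (w ++ [:: false; u]))))))
          (ncscale c (Rw [:: u] (d1 (ncw w)))))).
Proof.
elim: w => [|a w IH] /=; setoid_rewrite theta_cons.
  setoid_rewrite (theta_nil c); rewrite mulr0n; coef_ring.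
setoid_rewrite IH; setoid_rewrite d1_cons; autorewrite with linear.
setoid_rewrite Lw_Rw; setoid_rewrite Lw_ncw; setoid_rewrite Rw_ncw.
rewrite size_cat natrD /= mulr1n; coef_ring.
Qed.

Lemma d1_Rw u : forall p, nceq (d1 (Rw [:: u] p))
  (ncadd (Rw [:: u] (d1 p)) (ncscale (sgn u) (Rw [:: false] (Rw [:: true] p)))).
Proof.
apply: (@linop_words (opcomp d1 (Rw [:: u]))
  (opadd (opcomp (Rw [:: u]) d1) (opscale (sgn u) (opcomp (Rw [:: false]) (Rw [:: true])))));
  auto with linop.
move=> w; rewrite /opcomp /opadd /opscale.
by repeat setoid_rewrite Rw_ncw; setoid_rewrite d1_rcons; rewrite -catA.
Qed.

Lemma theta_Rw c u : forall p, nceq (theta c (Rw [:: u] p))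
  (ncadd (Rw [:: u] (theta c p))
   (ncadd (ncscale (1 / 2%:R) (ncadd (Rz (Rw [:: u] p)) (Rw [:: u] (Rz p))))
          (ncscale c (Rw [:: u] (d1 p))))).
Proof.
apply: (@linop_words (opcomp (theta c) (Rw [:: u]))
  (opadd (opcomp (Rw [:: u]) (theta c))
     (opadd (opscale (1 / 2%:R) (opadd (opcomp Rz (Rw [:: u])) (opcomp (Rw [:: u]) Rz)))
            (opscale c (opcomp (Rw [:: u]) d1))))); auto 7 with linop.
move=> w; rewrite /opcomp /opadd /opscale; setoid_rewrite Rz_split; autorewrite with linear.
repeat setoid_rewrite Rw_ncw; setoid_rewrite theta_rcons; rewrite -!catA; coef_ring.
Qed.

(* ∂_1 commutes with R_z: the commutators with R_x and R_y cancel. *)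
Lemma d1_Rz p : nceq (d1 (Rz p)) (Rz (d1 p)).
Proof.
setoid_rewrite Rz_split; autorewrite with linear.
by repeat setoid_rewrite d1_Rw; rewrite !sgnE; coef_ring.
Qed.

Lemma theta_Rz c p : nceq (theta c (Rz p))
  (ncadd (Rz (theta c p)) (ncadd (Rz (Rz p)) (ncscale c (Rz (d1 p))))).
Proof.
setoid_rewrite Rz_split; autorewrite with linear.
repeat setoid_rewrite theta_Rw; repeat setoid_rewrite Rz_split; autorewrite with linear.
by move=> v; rewrite ?(ncoef_add, ncoef_scale); field.
Qed.

Lemma dn_nil c n : nceq (dn c n.+1 (ncw [::])) [::].
Proof.
elim: n => [|n IH]; first by setoid_rewrite dn_1; exact: d1_nil.
setoid_rewrite dn_succ; setoid_rewrite IH; setoid_rewrite (theta_nil c).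
by setoid_rewrite (linop_nil (linop_dn c n.+1)); coef_ring.
Qed.

Lemma ncscale_div a p : a != 0 -> nceq (ncscale a (ncscale (1 / a) p)) p.
Proof. by move=> a0 v; rewrite !ncoef_scale mulrA div1r mulfV ?mul1r. Qed.

Lemma ad_theta_dn c k p :
  nceq (ad (theta c) (dn c k.+1) p) (ncscale k.+1%:R (dn c k.+2 p)).
Proof.
by setoid_rewrite (dn_succ c k p); symmetry; apply: ncscale_div; rewrite pnatr_eq0.
Qed.

Definition rule_Rw (c : rat) (n : nat) : Prop :=
  forall u p, nceq (dn c n (Rw [:: u] p))
    (ncadd (Rw [:: u] (dn c n p))
           (ncscale (sgn u) (Rw [:: false] (phi c n.-1 (Rw [:: true] p))))).

Definition comm_Rz (c : rat) (n : nat) : Prop :=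
  forall p, nceq (dn c n (Rz p)) (Rz (dn c n p)).

Definition comm_d1 (c : rat) (n : nat) : Prop :=
  forall p, nceq (d1 (dn c n p)) (dn c n (d1 p)).

(* Summing the rule over u = x, y, the two correction terms cancel. *)
Lemma comm_Rz_of_rule c n : rule_Rw c n -> comm_Rz c n.
Proof.
move=> C p; rewrite /rule_Rw in C; setoid_rewrite Rz_split; autorewrite with linear.
by repeat setoid_rewrite C; rewrite !sgnE; coef_ring.
Qed.

Lemma rule_Rw_1 c : rule_Rw c 1.
Proof. by move=> u p; rewrite /= phi_0; setoid_rewrite dn_1; apply: d1_Rw. Qed.

Lemma comm_d1_1 c : comm_d1 c 1.
Proof. by move=> p; setoid_rewrite dn_1. Qed.

(* ∂_{m+2} = [θ, ∂_{m+1}]/(m+1) and φ_{m+1} is built from φ_m by the same kind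
   of recursion, so the rule propagates, using [θ, R_u] and [∂_1, ∂_{m+1}] = 0. *)
Lemma rule_Rw_succ c m : rule_Rw c m.+1 -> comm_d1 c m.+1 -> rule_Rw c m.+2.
Proof.
move=> C K; have Z := comm_Rz_of_rule C.
rewrite /rule_Rw /comm_d1 /comm_Rz in C K Z * => u p /=.
setoid_rewrite (dn_succ c m); setoid_rewrite (phi_succ c m); autorewrite with linear.
repeat first [ setoid_rewrite (theta_Rw c) | setoid_rewrite C | setoid_rewrite Z
             | setoid_rewrite <- K | progress autorewrite with linear ].
coef_ring.
Qed.

(* [A] commutes with ∂_1 - R_z, i.e. [∂_1, A] = [R_z, A] *)
Definition comm_delta (A : op) : Prop := forall p,
  nceq (d1 (A p)) (ncadd (Rz (A p)) (ncadd (A (d1 p)) (ncscale (-1) (A (Rz p))))).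

(* [∂_1, ∂_{m+1}] = 0, by induction on words peeling off the last letter: the
   rule moves ∂_{m+1} past R_u, and ∂_1 passes φ_m thanks to [comm_delta]. *)
Lemma comm_d1_succ c m : rule_Rw c m.+1 -> comm_delta (phi c m) -> comm_d1 c m.+1.
Proof.
move=> C E; rewrite /rule_Rw /comm_delta /= in C E.
apply: (@linop_words (opcomp d1 (dn c m.+1)) (opcomp (dn c m.+1) d1)); auto with linop.
rewrite /opcomp; elim/last_ind => [|w u IH].
  setoid_rewrite d1_nil; setoid_rewrite dn_nil; setoid_rewrite (linop_nil linop_d1).
  by setoid_rewrite (linop_nil (linop_dn c m.+1)).
rewrite -cats1; setoid_rewrite <- Rw_ncw.
repeat first [ setoid_rewrite C | setoid_rewrite d1_Rw | setoid_rewrite IH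
             | setoid_rewrite E | progress autorewrite with linear ].
repeat setoid_rewrite Rz_split; autorewrite with linear.
by rewrite !sgnE; coef_ring.
Qed.

(* [gen_alg c m A]: A lies, up to equality on H, in the unital algebra of
   operators generated by R_z and ∂_1^(c), ..., ∂_m^(c). *)
Inductive gen_alg (c : rat) (m : nat) : op -> Prop :=
  | gen_id : gen_alg c m (fun p => p)
  | gen_Rz : gen_alg c m Rz
  | gen_dn k : (0 < k <= m)%N -> gen_alg c m (dn c k)
  | gen_add A B : gen_alg c m A -> gen_alg c m B -> gen_alg c m (opadd A B)
  | gen_scale a A : gen_alg c m A -> gen_alg c m (opscale a A)
  | gen_comp A B : gen_alg c m A -> gen_alg c m B -> gen_alg c m (opcomp A B)
  | gen_eq A B : gen_alg c m A -> linop B -> (forall p, nceq (A p) (B p)) -> gen_alg c m B.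

Lemma gen_alg_linop c m A : gen_alg c m A -> linop A.
Proof. by elim=> *; auto with linop. Qed.

Lemma gen_alg_succ c m A : gen_alg c m A -> gen_alg c m.+1 A.
Proof.
elim=> [|||F G _ gF _ gG|a F _ gF|F G _ gF _ gG|F G _ gF lG eFG].
- exact: gen_id.
- exact: gen_Rz.
- by move=> k /andP[k0 km]; apply: gen_dn; rewrite k0 ltnW.
- exact: gen_add.
- exact: gen_scale.
- exact: gen_comp.
- exact: gen_eq gF lG eFG.
Qed.

Lemma d1_gen_alg c m : gen_alg c m.+1 d1.
Proof.
by apply: (gen_eq (gen_dn c (k := 1) _)) => //; [auto with linop | apply: dn_1].
Qed.

(* If ∂_1, ..., ∂_m commute with ∂_1 and R_z, the whole algebra commutes with
   ∂_1 - R_z (R_z commutes with ∂_1 by [d1_Rz]). *)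
Lemma gen_alg_comm_delta c m A :
  (forall k, (0 < k <= m)%N -> comm_d1 c k /\ comm_Rz c k) ->
  gen_alg c m A -> comm_delta A.
Proof.
move=> hk; elim=> [p|p|k /hk[K Z] p|F G _ EF _ EG p|a F _ EF p|F G gF EF _ EG p|
                   F G gF EF lG eFG p].
- by coef_ring.
- by setoid_rewrite d1_Rz; coef_ring.
- by rewrite /comm_d1 /comm_Rz in K Z; setoid_rewrite K; setoid_rewrite Z; coef_ring.
- rewrite /comm_delta /opadd in EF EG *; autorewrite with linear.
  by setoid_rewrite EF; setoid_rewrite EG; coef_ring.
- rewrite /comm_delta /opscale in EF *; autorewrite with linear.
  by setoid_rewrite EF; coef_ring.
- have lF := gen_alg_linop gF; have pF := linop_proper lF.
  rewrite /comm_delta /opcomp in EF EG *.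
  setoid_rewrite EF; setoid_rewrite (EG p).
  setoid_rewrite (linopD lF); setoid_rewrite (linopD lF).
  by setoid_rewrite (linopZ lF); coef_ring.
- have pG := linop_proper lG; rewrite /comm_delta in EF.
  setoid_rewrite <- (eFG p); setoid_rewrite EF.
  by setoid_rewrite (eFG p); setoid_rewrite (eFG (d1 p)); setoid_rewrite (eFG (Rz p)).
Qed.

(* ad θ maps the algebra at level m into the algebra at level m+1:
   [θ, R_z] = R_z^2 + c R_z ∂_1 and [θ, ∂_k] = k ∂_{k+1}. *)
Lemma gen_alg_ad_theta c m A : gen_alg c m A -> gen_alg c m.+1 (ad (theta c) A).
Proof.
have lth := linop_theta c.
elim=> [|||F G gF IF gG IG|a F gF IF|F G gF IF gG IG|F G gF IF lG eFG].
- apply: (gen_eq (gen_scale 0 (gen_id c m.+1))); auto with linop.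
  by move=> p; coef_ring.
- apply: (gen_eq (A := opadd (opcomp Rz Rz) (opscale c (opcomp Rz d1)))).
  + by apply: gen_add; [|apply: gen_scale]; apply: gen_comp;
      [apply: gen_Rz | apply: gen_Rz | apply: gen_Rz | apply: d1_gen_alg].
  + auto with linop.
  + move=> p; rewrite /ad /opsub /opcomp /opadd /opscale.
    by setoid_rewrite theta_Rz; coef_ring.
- case=> [//|k] /andP[_ km].
  apply: (gen_eq (A := opscale k.+1%:R (dn c k.+2))); auto with linop.
    by apply/gen_scale/gen_dn.
  by move=> p; symmetry; apply: ad_theta_dn.
- have lF := gen_alg_linop gF; have lG := gen_alg_linop gG.
  apply: (gen_eq (gen_add IF IG)); auto with linop.
  by move=> p; rewrite /ad /opsub /opcomp /opadd; setoid_rewrite (linopD lth); coef_ring.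
- have lF := gen_alg_linop gF.
  apply: (gen_eq (gen_scale a IF)); auto with linop.
  by move=> p; rewrite /ad /opsub /opcomp /opscale; setoid_rewrite (linopZ lth); coef_ring.
- have lF := gen_alg_linop gF; have lG := gen_alg_linop gG.
  apply: (gen_eq (gen_add (gen_comp IF (gen_alg_succ gG))
                          (gen_comp (gen_alg_succ gF) IG))); auto with linop.
  move=> p; rewrite /ad /opsub /opcomp /opadd; setoid_rewrite (linopD lF).
  setoid_rewrite (linopZ lF); coef_ring.
- apply: (gen_eq IF); auto with linop.
  move=> p; rewrite /ad /opsub /opcomp.
  by setoid_rewrite (eFG p); setoid_rewrite (eFG (theta c p)).
Qed.

Lemma phi_gen_alg c m : gen_alg c m (phi c m).
Proof.
elim: m => [|m IH]; first exact: gen_id.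
apply: (gen_eq (A := opscale (1 / m.+1%:R) (opadd (ad (theta c) (phi c m))
   (opadd (opscale (1 / 2%:R) (opadd (opcomp Rz (phi c m)) (opcomp (phi c m) Rz)))
          (opscale c (opcomp d1 (phi c m))))))); auto with linop; last first.
  by move=> p; symmetry; apply: phi_succ.
have IH' := gen_alg_succ IH.
apply/gen_scale/gen_add; first exact: gen_alg_ad_theta.
apply: gen_add; apply: gen_scale; last exact/gen_comp/IH'/d1_gen_alg.
by apply: gen_add; apply: gen_comp => //; apply: gen_Rz.
Qed.

Lemma main_induction c n :
  rule_Rw c n.+1 /\ (forall k, (0 < k <= n.+1)%N -> comm_d1 c k /\ comm_Rz c k).
Proof.
elim: n => [|m [C hk]].
  split=> [|k]; first exact: rule_Rw_1.
  case: k => [//|[|//]] _; split; [exact: comm_d1_1 | exact/comm_Rz_of_rule/rule_Rw_1].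
have K : comm_d1 c m.+1 by case: (hk m.+1); rewrite ?leqnn.
have C' := rule_Rw_succ C K.
have K' := comm_d1_succ C' (gen_alg_comm_delta hk (phi_gen_alg c m.+1)).
split=> // k /andP[k0]; rewrite leq_eqVlt => /orP[/eqP-> | kle].
  by split=> //; apply: comm_Rz_of_rule.
by apply: hk; rewrite k0.
Qed.

Theorem mainTheorem6 (n : nat) (c : rat) : (1 <= n)%N ->
  (forall (w : ncpoly) (u : bool),
     nceq (dn c n (Rw [:: u] w))
          (ncadd (Rw [:: u] (dn c n w))
                 (ncscale (sgn u) (Rw [:: false] (phi c n.-1 (Rw [:: true] w)))))) /\
  (forall w : ncpoly, nceq (dn c n (Rz w)) (Rz (dn c n w))).
Proof.
case: n => // n _; have [rule _] := main_induction c n.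
by split=> [w u | w]; [apply: rule | apply: comm_Rz_of_rule].
Qed.
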